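(* Let $M$ be a regular, residually finite monoid. Then the (right) action of $M$ on its $\mathcal{L}$-classes and the left action of $M$ on its $\mathcal{R}$-classes are both residually finite. Equivalently, for any $s,t\in M$ with $(s,t)\notin\mathcal{L}$ there is a right congruence $\rho$ of finite index on $M$ with $\mathcal{L}\subseteq\rho$ and $(s,t)\notin\rho$, and dually for $\mathcal{R}$ with left congruences.
   Context: A monoid $M$ is regular if for every $x\in M$ there is $y\in M$ with $xyx=x$. It is residually finite if any two distinct elements are separated by a homomorphism to a finite monoid. Green's relations: $x\mathcal{R}y$ iff $xM=yM$, $x\mathcal{L}y$ iff $Mx=My$. $\mathcal{L}$ is a right congruence, so $M$ acts on the right on $M/\mathcal{L}$ by $L_x\cdot m=L_{xm}$; dually $M$ acts on the left on $M/\mathcal{R}$. A right action of $M$ on a set $X$ is residually finite if for any distinct $x,y\in X$ there is an action of $M$ on a finite set $Y$ and a map $f:X\to Y$ with $f(xm)=f(x)m$ for all $x,m$ and $f(x)\neq f(y)$ (dually for left actions). A right congruence has finite index if it has finitely many classes. *)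

From mathcomp Require Import all_boot.
Set Implicit Arguments. Unset Strict Implicit. Unset Printing Implicit Defensive.

Definition is_monoid (T : Type) (mul : T -> T -> T) (one : T) : Prop :=
  (forall x y z, mul x (mul y z) = mul (mul x y) z) /\
  (forall x, mul one x = x) /\ (forall x, mul x one = x).

Definition is_monoid_hom (A B : Type) (mulA : A -> A -> A) (oneA : A)
  (mulB : B -> B -> B) (oneB : B) (f : A -> B) : Prop :=
  (forall x y, f (mulA x y) = mulB (f x) (f y)) /\ f oneA = oneB.

Definition regular_monoid (M : Type) (mul : M -> M -> M) : Prop :=
  forall x, exists y, mul (mul x y) x = x.

Definition residually_finite_monoid (M : Type) (mul : M -> M -> M) (one : M) : Prop :=
  forall x y : M, x <> y ->
    exists (N : finType) (mulN : N -> N -> N) (oneN : N) (f : M -> N),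
      is_monoid mulN oneN /\ is_monoid_hom mul one mulN oneN f /\ f x <> f y.

Definition greenL (M : Type) (mul : M -> M -> M) (x y : M) : Prop :=
  exists a b, x = mul a y /\ y = mul b x.
Definition greenR (M : Type) (mul : M -> M -> M) (x y : M) : Prop :=
  exists a b, x = mul y a /\ y = mul x b.

Definition right_action (M : Type) (mul : M -> M -> M) (one : M)
  (X : Type) (act : X -> M -> X) : Prop :=
  (forall x, act x one = x) /\ (forall x a b, act (act x a) b = act x (mul a b)).
Definition left_action (M : Type) (mul : M -> M -> M) (one : M)
  (X : Type) (act : M -> X -> X) : Prop :=
  (forall x, act one x = x) /\ (forall a b x, act a (act b x) = act (mul a b) x).

(* Residual finiteness of the right action of M on the quotient set X/E,
   where the action on classes is [x]_E . m = [act x m]_E.  A map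
   f : X/E -> Y is represented by g : X -> Y constant on E-classes
   (g = f o [_]_E); equivariance of f is equivariance of g. *)
Definition rf_right_action_quot (M : Type) (mul : M -> M -> M) (one : M)
  (X : Type) (E : X -> X -> Prop) (act : X -> M -> X) : Prop :=
  forall x y : X, ~ E x y ->
    exists (Y : finType) (actY : Y -> M -> Y) (g : X -> Y),
      right_action mul one actY /\
      (forall u v, E u v -> g u = g v) /\
      (forall u m, g (act u m) = actY (g u) m) /\
      g x <> g y.

Definition rf_left_action_quot (M : Type) (mul : M -> M -> M) (one : M)
  (X : Type) (E : X -> X -> Prop) (act : M -> X -> X) : Prop :=
  forall x y : X, ~ E x y ->
    exists (Y : finType) (actY : M -> Y -> Y) (g : X -> Y),
      left_action mul one actY /\
      (forall u v, E u v -> g u = g v) /\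
      (forall u m, g (act m u) = actY m (g u)) /\
      g x <> g y.

(* Let t lie outside the principal left ideal Ms, and pick s' with ss's = s.
   Then t(s's) <> t, so some morphism f into a finite monoid N separates
   t(s's) and t.  The map x |-> f(Mx), from M to the subsets of N, is
   constant on L-classes and intertwines right multiplication on M with
   right multiplication by f(m) on subsets; f(t) lies in f(Mt) but not in
   f(Ms), since f(as) = f(t) would give f(t s's) = f(as s's) = f(as) = f(t).
   The statement for R follows by passing to the opposite monoid. *)
From mathcomp Require Import all_boot.
From mathcomp Require Import boolp.
Set Implicit Arguments. Unset Strict Implicit. Unset Printing Implicit Defensive.

Section LidealImage.
Variables (M : Type) (mul : M -> M -> M) (one : M).
Variables (N : finType) (mulN : N -> N -> N) (oneN : N) (f : M -> N).
Hypotheses (monoidM : is_monoid mul one) (monoidN : is_monoid mulN oneN).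
Hypothesis homf : is_monoid_hom mul one mulN oneN f.

Definition set_rmul (A : {set N}) (m : M) : {set N} := [set mulN b (f m) | b in A].

Lemma set_rmul_action : right_action mul one set_rmul.
Proof.
have [mulNA [_ mulN1]] := monoidN; have [fM f1] := homf.
split=> [A | A a b]; rewrite /set_rmul.
  by rewrite f1 (eq_imset _ mulN1) imset_id.
by rewrite -imset_comp fM; apply: eq_imset => c /=; rewrite mulNA.
Qed.

Definition lideal_image (x : M) : {set N} :=
  [set n | `[< exists a, f (mul a x) = n >]].

Lemma mem_lideal_image x n :
  reflect (exists a, f (mul a x) = n) (n \in lideal_image x).
Proof. by rewrite inE; apply: asboolP. Qed.

Lemma lideal_image_self x : f x \in lideal_image x.
Proof.
have [_ [mul1 _]] := monoidM.
by apply/mem_lideal_image; exists one; rewrite mul1.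
Qed.

Lemma lideal_image_greenL x y : greenL mul x y -> lideal_image x = lideal_image y.
Proof.
have [mulA _] := monoidM.
move=> [a [b [xE yE]]]; apply/setP=> n.
apply/mem_lideal_image/mem_lideal_image=> -[c <-].
  by exists (mul c a); rewrite xE mulA.
by exists (mul c b); rewrite yE mulA.
Qed.

Lemma lideal_image_mul x m :
  lideal_image (mul x m) = set_rmul (lideal_image x) m.
Proof.
have [mulA _] := monoidM; have [fM _] := homf.
apply/setP=> n; apply/mem_lideal_image/imsetP.
  by move=> [a <-]; exists (f (mul a x)); [apply/mem_lideal_image; exists a|rewrite mulA fM].
by move=> [_ /mem_lideal_image [a <-] ->]; exists a; rewrite mulA fM.
Qed.

End LidealImage.

Definition rseparated (M : Type) (mul : M -> M -> M) (one : M)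
    (X : Type) (E : X -> X -> Prop) (act : X -> M -> X) (x y : X) : Prop :=
  exists (Y : finType) (actY : Y -> M -> Y) (g : X -> Y),
    right_action mul one actY /\
    (forall u v, E u v -> g u = g v) /\
    (forall u m, g (act u m) = actY (g u) m) /\
    g x <> g y.

Lemma rseparated_sym (M : Type) (mul : M -> M -> M) (one : M)
    (X : Type) (E : X -> X -> Prop) (act : X -> M -> X) (x y : X) :
  rseparated mul one E act x y -> rseparated mul one E act y x.
Proof.
by move=> [Y [actY [g [? [? [? gxy]]]]]]; exists Y, actY, g; do 3!split=> //; apply: nesym.
Qed.

Section RegularResiduallyFinite.
Variables (M : Type) (mul : M -> M -> M) (one : M).
Hypotheses (monoidM : is_monoid mul one) (regM : regular_monoid mul).
Hypothesis rfM : residually_finite_monoid mul one.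

Lemma rseparated_notin_lideal s t : ~ (exists a, t = mul a s) ->
  rseparated mul one (greenL mul) (fun x m => mul x m) s t.
Proof.
move=> t_notin; have [mulA _] := monoidM; have [s' ss's] := regM s.
have tss't : mul t (mul s' s) <> t.
  by move=> tE; apply: t_notin; exists (mul t s'); rewrite -mulA tE.
have [N [mulN [oneN [f [monoidN [homf fne]]]]]] := rfM tss't.
have [fM _] := homf.
exists {set N}, (set_rmul mulN f), (lideal_image mul f).
split; first exact: set_rmul_action monoidN homf.
split; first exact: lideal_image_greenL monoidM.
split; first exact: lideal_image_mul monoidM homf.
move=> st_img; have := lideal_image_self f monoidM t.
rewrite -st_img => /mem_lideal_image [a fas].
by apply: fne; rewrite fM -fas -fM mulA -(mulA a s s') -mulA ss's.
Qed.

Lemma rf_right_action_greenL :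
  rf_right_action_quot mul one (greenL mul) (fun x m => mul x m).
Proof.
move=> x y xNy; have [[a yE]|y_notin] := pselect (exists a, y = mul a x).
  apply: (rseparated_sym (rseparated_notin_lideal _)) => -[b xE].
  by apply: xNy; exists b, a.
exact: rseparated_notin_lideal.
Qed.

End RegularResiduallyFinite.

Definition op_mul (M : Type) (mul : M -> M -> M) : M -> M -> M := fun a b => mul b a.

Lemma is_monoid_op (M : Type) (mul : M -> M -> M) (one : M) :
  is_monoid mul one -> is_monoid (op_mul mul) one.
Proof. by move=> [mulA [mul1 mulr1]]; split=> [x y z|]; [rewrite /op_mul mulA|]. Qed.

Lemma regular_monoid_op (M : Type) (mul : M -> M -> M) (one : M) :
  is_monoid mul one -> regular_monoid mul -> regular_monoid (op_mul mul).
Proof. by move=> [mulA _] regM x; have [y xyx] := regM x; exists y; rewrite /op_mul mulA. Qed.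

Lemma residually_finite_monoid_op (M : Type) (mul : M -> M -> M) (one : M) :
  residually_finite_monoid mul one -> residually_finite_monoid (op_mul mul) one.
Proof.
move=> rfM x y xy; have [N [mulN [oneN [f [monoidN [[fM f1] fxy]]]]]] := rfM x y xy.
exists N, (op_mul mulN), oneN, f; split; first exact: is_monoid_op monoidN.
by split=> //; split=> // a b; rewrite /op_mul fM.
Qed.

Lemma rf_left_action_op (M : Type) (mul : M -> M -> M) (one : M)
    (X : Type) (E : X -> X -> Prop) (act : M -> X -> X) :
  rf_right_action_quot (op_mul mul) one E (fun x m => act m x) ->
  rf_left_action_quot mul one E act.
Proof.
move=> rfop x y xNy; have [Y [actY [g [[act1 actM] rest]]]] := rfop x y xNy.
by exists Y, (fun m u => actY u m), g; split=> //; split=> // a b u; rewrite actM.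
Qed.

Theorem mainTheorem2 (M : Type) (mul : M -> M -> M) (one : M) :
  is_monoid mul one ->
  regular_monoid mul ->
  residually_finite_monoid mul one ->
  rf_right_action_quot mul one (greenL mul) (fun x m => mul x m) /\
  rf_left_action_quot mul one (greenR mul) (fun m x => mul m x).
Proof.
move=> monoidM regM rfM; split; first exact: rf_right_action_greenL.
apply: rf_left_action_op; apply: rf_right_action_greenL.
- exact: is_monoid_op.
- exact: regular_monoid_op monoidM regM.
- exact: residually_finite_monoid_op.
Qed.
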